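(* Let $S$ be a set, let $f:2^S\to 2^S$ be monotonic with respect to $\subseteq$, and let $\mathcal{W}\subseteq 2^S$ be a set of subsets of $S$ each of which is well-supported for $f$. Then $\bigcup\mathcal{W}$ is well-supported for $f$.
   Context: The Axiom of Choice is assumed. For a binary relation ${\prec}$ on $X$ and $x\in X$, $\prec^{-1}(x)=\{x'\in X\mid x'\prec x\}$. A pair $(X,\prec)$ is a support ordering for $f$ if $X\subseteq S$, ${\prec}\subseteq X\times X$, and $x\in f(\prec^{-1}(x))$ for every $x\in X$. A relation is well-founded if every nonempty subset $Y$ of its carrier has an element $y$ such that no $y'\in Y$, $y'\neq y$, satisfies $y'\prec y$. A set $X\subseteq S$ is well-supported for $f$ if there is a well-founded ${\prec}\subseteq X\times X$ such that $(X,\prec)$ is a support ordering for $f$. *)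

Set Implicit Arguments.

Definition subset {S : Type} (A B : S -> Prop) : Prop := forall x, A x -> B x.

Definition monotonic {S : Type} (f : (S -> Prop) -> (S -> Prop)) : Prop :=
  forall A B, subset A B -> subset (f A) (f B).

Definition preimage_rel {S : Type} (prec : S -> S -> Prop) (x : S) : S -> Prop :=
  fun x' => prec x' x.

Definition support_ordering {S : Type} (f : (S -> Prop) -> (S -> Prop))
  (X : S -> Prop) (prec : S -> S -> Prop) : Prop :=
  (forall x y, prec x y -> X x /\ X y) /\
  (forall x, X x -> f (preimage_rel prec x) x).

Definition well_founded_on {S : Type} (X : S -> Prop) (prec : S -> S -> Prop) : Prop :=
  forall Y : S -> Prop, subset Y X -> (exists y, Y y) ->
    exists y, Y y /\ forall y', Y y' -> y' <> y -> ~ prec y' y.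

Definition well_supported {S : Type} (f : (S -> Prop) -> (S -> Prop)) (X : S -> Prop) : Prop :=
  exists prec : S -> S -> Prop, well_founded_on X prec /\ support_ordering f X prec.

Definition bigunion {S : Type} (W : (S -> Prop) -> Prop) : S -> Prop :=
  fun x => exists A, W A /\ A x.

(* Well-order W and give each x of the union its least member of W as rank.
   Order the union lexicographically: first by rank, then, inside one member
   X of W, by the support ordering chosen for X.  A nonempty subset has a
   minimal element: take its least rank, then a minimal element of that
   fibre.  For the support condition, the chosen predecessors of x inside its
   rank X lie in X, so their rank is at most X and they are lexicographic
   predecessors of x, and monotonicity of f carries x over from
   f(prec_X^{-1}(x)) to f applied to its lexicographic predecessors. *)

From mathcomp Require Import ssreflect ssrfun ssrbool eqtype.
From mathcomp Require Import boolp wochoice.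

Set Implicit Arguments.
Unset Strict Implicit.

Lemma guarded_choice (A B : Type) (D : A -> Prop) (R : A -> B -> Prop) :
  inhabited B -> (forall a, D a -> exists b, R a b) ->
  exists g : A -> B, forall a, D a -> R a (g a).
Proof.
move=> [b0] hR.
have total a : exists b, D a -> R a b.
  have [/hR [b Rab]|nDa] := pselect (D a); first by exists b.
  by exists b0 => /nDa.
by have [g gR] := choice total; exists g.
Qed.

Definition least_element (T : Type) (lt : T -> T -> Prop) (P : T -> Prop) (m : T) :=
  P m /\ forall y, P y -> y <> m -> lt m y.

Definition strict_well_order (T : Type) (lt : T -> T -> Prop) : Prop :=
  (forall x y, lt x y -> ~ lt y x) /\
  (forall P : T -> Prop, (exists x, P x) -> exists m, least_element lt P m).

Lemma strict_well_order_exists (T : Type) :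
  exists lt : T -> T -> Prop, strict_well_order lt.
Proof.
have [R woR] := well_ordering_principle {classic T}.
have R_anti : antisymmetric R :=
  in2T (wo_chain_antisymmetric (withinW (A := predT) woR)).
exists (fun x y => R x y /\ x <> y); split.
  by move=> x y [Rxy nexy] [Ryx _]; apply: nexy; apply: R_anti; rewrite Rxy Ryx.
move=> P [x Px].
have [|m [[/asboolP Pm m_lb] _]] := woR [pred y | `[< P y >]].
  by exists x; apply/asboolP.
by exists m; split=> // y Py neym; split; [apply: m_lb; apply/asboolP | apply/nesym].
Qed.

Lemma strict_well_order_wf (T : Type) (lt : T -> T -> Prop) (X : T -> Prop) :
  strict_well_order lt -> well_founded_on X lt.
Proof.
move=> [lt_asym lt_least] Y _ /lt_least [m [Ym m_least]].
by exists m; split=> // y Yy neym /lt_asym; apply; apply: m_least.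
Qed.

Lemma well_founded_on_subset (S : Type) (X X' : S -> Prop) (prec : S -> S -> Prop) :
  subset X' X -> well_founded_on X prec -> well_founded_on X' prec.
Proof. by move=> sX'X wf Y sYX'; apply: wf => y /sYX'/sX'X. Qed.

Lemma well_founded_on_subrel (S : Type) (X : S -> Prop) (prec prec' : S -> S -> Prop) :
  (forall x y, prec' x y -> prec x y) ->
  well_founded_on X prec -> well_founded_on X prec'.
Proof.
move=> sub wf Y sYX /(wf Y sYX) [y [Yy y_min]].
by exists y; split=> // y' Yy' ne /sub; apply: y_min.
Qed.

Definition lex_rel (S T : Type) (r : S -> T) (lt : T -> T -> Prop)
    (prec : T -> S -> S -> Prop) (x' x : S) : Prop :=
  (r x' <> r x /\ lt (r x') (r x)) \/ (r x' = r x /\ prec (r x) x' x).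

Lemma well_founded_on_lex (S T : Type) (X : S -> Prop) (r : S -> T)
    (lt : T -> T -> Prop) (prec : T -> S -> S -> Prop) :
  well_founded_on (fun _ => True) lt ->
  (forall i, well_founded_on (fun x => X x /\ r x = i) (prec i)) ->
  well_founded_on X (lex_rel r lt prec).
Proof.
move=> lt_wf prec_wf Y sYX [y0 Yy0].
have [|m [[y1 [Yy1 ry1]] m_min]] :=
  lt_wf (fun i => exists y, Y y /\ r y = i) (fun _ _ => I).
  by exists (r y0), y0.
have fibre_sub : subset (fun y => Y y /\ r y = m) (fun x => X x /\ r x = m).
  by move=> y [Yy ry]; split; [apply: sYX|].
have [y [[Yy ry] y_min]] := prec_wf m _ fibre_sub (ex_intro _ y1 (conj Yy1 ry1)).
exists y; split=> // y' Yy' neyy' [[ne lty'y]|[eqr precy'y]].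
  by apply: (m_min (r y')); [exists y' | rewrite -ry | rewrite -ry].
by apply: (y_min y'); [split; rewrite // eqr | | rewrite -ry].
Qed.

Section UnionOfWellSupported.

Variables (S : Type) (f : (S -> Prop) -> S -> Prop) (W : (S -> Prop) -> Prop).
Variable lt : (S -> Prop) -> (S -> Prop) -> Prop.
Hypothesis lt_wo : strict_well_order lt.
Variable ord : (S -> Prop) -> S -> S -> Prop.
Hypothesis ord_supp :
  forall X, W X -> well_founded_on X (ord X) /\ support_ordering f X (ord X).
Variable rank : S -> S -> Prop.
Hypothesis rank_least :
  forall x, bigunion W x -> least_element lt (fun X => W X /\ X x) (rank x).

Definition union_ord (x' x : S) : Prop :=
  bigunion W x' /\ bigunion W x /\ lex_rel rank lt ord x' x.

Lemma union_ord_wf : well_founded_on (bigunion W) union_ord.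
Proof.
apply: (well_founded_on_subrel (prec := lex_rel rank lt ord)) => [x' x [_ [_ lex]] //|].
apply: well_founded_on_lex; first exact: strict_well_order_wf.
move=> X Y sY [y Yy]; have [Uy ry] := sY y Yy.
have [[WX _] _] := rank_least Uy; rewrite ry in WX.
have fibre_sub : subset (fun x => bigunion W x /\ rank x = X) X.
  by move=> x [/rank_least [[_ rx] _] <-].
exact: (well_founded_on_subset fibre_sub (proj1 (ord_supp WX)) sY (ex_intro _ y Yy)).
Qed.

Hypothesis f_mono : monotonic f.

Lemma union_ord_support : support_ordering f (bigunion W) union_ord.
Proof.
split=> [x' x [Ux' [Ux _]] //|x Ux].
have [[Wr rx] _] := rank_least Ux.
have [_ [ord_dom ord_pre]] := ord_supp Wr.
apply: f_mono (ord_pre x rx) => x' ordx'x.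
have [rx'x _] := ord_dom x' x ordx'x.
have Ux' : bigunion W x' by exists (rank x).
split=> //; split=> //; rewrite /lex_rel.
have [->|ne] := pselect (rank x' = rank x); first by right.
by left; split=> //; apply: (proj2 (rank_least Ux') _ (conj Wr rx'x)); apply/nesym.
Qed.

End UnionOfWellSupported.

Theorem lemma7 (S : Type) (f : (S -> Prop) -> (S -> Prop))
  (W : (S -> Prop) -> Prop) :
  monotonic f ->
  (forall X, W X -> well_supported f X) ->
  well_supported f (bigunion W).
Proof.
move=> f_mono W_ws.
have [lt lt_wo] := strict_well_order_exists (S -> Prop).
have [ord ord_supp] := guarded_choice (inhabits (fun _ _ : S => False)) W_ws.
have [rank rank_least] := guarded_choice (inhabits (fun _ : S => False))
  (fun x (Ux : bigunion W x) => proj2 lt_wo (fun X => W X /\ X x) Ux).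
exists (union_ord W lt ord rank); split.
  exact: (union_ord_wf lt_wo ord_supp rank_least).
exact: (union_ord_support ord_supp rank_least f_mono).
Qed.
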